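(* Consider the one-dimensional compressible Euler equations for a perfect gas with ratio of specific heats $\gamma>1$, with conserved variables $\mathbf U=(\rho,\rho u,\rho E)^T$ and flux $\mathbf F(\mathbf U)=(\rho u,\ \rho u^2+p,\ \rho uE+pu)^T$, where $E=\frac{p}{(\gamma-1)\rho}+\frac{u^2}{2}$, restricted to states with $\rho>0,\ p>0$. Let cells $j$ of widths $\Delta x_j>0$ carry states $\mathbf U_j(t)$, and consider the semi-discrete finite-volume scheme $$\Delta x_j\frac{d\mathbf U_j}{dt}=-\big(\mathbf F_{j+\frac12}-\mathbf F_{j-\frac12}\big),$$ where the interface flux $\mathbf F_{j+\frac12}=(F^1,F^2,F^3)_{j+\frac12}$ is the ECKEP flux $$F^1_{j+\frac12}=\overline{F^1},\qquad F^2_{j+\frac12}=\overline{F^1}\,\overline{u}+\overline{p},\qquad F^3_{j+\frac12}=\overline{F^3}-\frac{\alpha_3}{2}\,\Delta V_3,$$ $$\frac{\alpha_3}{2}=\frac{\overline{F^1}\,\Delta V_1+(\overline{F^1}\,\overline{u}+\overline{p})\,\Delta V_2+\overline{F^3}\,\Delta V_3-\Delta\psi}{\Delta V_3\,\Delta V_3}.$$ Here, for any cell quantity $X$, $\overline{X}=\overline{X}_{j+\frac12}=\tfrac12(X_{j+1}+X_j)$ and $\Delta X=\Delta X_{j+\frac12}=X_{j+1}-X_j$; $F^1,F^3$ denote the first and third components of $\mathbf F(\mathbf U)$ evaluated at cell states; $\mathbf V=(V_1,V_2,V_3)$ is the entropy variable vector and $\psi$ the entropy flux potential defined in the context. Assume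 $\Delta V_3\neq 0$ at every interface. Then: (i) at every interface, $(\mathbf V_{j+1}-\mathbf V_j)\cdot\mathbf F_{j+\frac12}=\psi_{j+1}-\psi_j$; (ii) every solution of the semi-discrete scheme satisfies, for each $j$, $$\Delta x_j\frac{d\eta(\mathbf U_j)}{dt}+\zeta_{j+\frac12}-\zeta_{j-\frac12}=0,\qquad \zeta_{j+\frac12}=\overline{\mathbf V}_{j+\frac12}\cdot\mathbf F_{j+\frac12}-\overline{\psi}_{j+\frac12};$$ (iii) every solution of the semi-discrete scheme satisfies, for each $j$, $$\Delta x_j\frac{d}{dt}\Big(\frac{\rho_ju_j^2}{2}\Big)+K_{j+\frac12}-K_{j-\frac12}=-u_j\big(\overline{p}_{j+\frac12}-\overline{p}_{j-\frac12}\big),\qquad K_{j+\frac12}=\frac{u_{j+1}u_j}{2}\,F^1_{j+\frac12}.$$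
   Context: Specific entropy: $s=\ln(p/\rho^\gamma)$. Mathematical entropy: $\eta(\mathbf U)=-\frac{\rho s}{\gamma-1}$. Entropy variables: $\mathbf V=\frac{d\eta}{d\mathbf U}=\Big(\frac{\gamma-s}{\gamma-1}-\frac{\rho u^2}{2p},\ \frac{\rho u}{p},\ -\frac{\rho}{p}\Big)^T$. Entropy flux potential: $\psi=\mathbf V\cdot\mathbf F(\mathbf U)-\zeta(\mathbf U)=\rho u$, where $\zeta(\mathbf U)=-\frac{\rho us}{\gamma-1}$. Subscript $j$ denotes evaluation at the state $\mathbf U_j$. *)

From Stdlib Require Import Reals ZArith.
From Coquelicot Require Import Coquelicot.
Open Scope R_scope.

(* A cell state in conserved variables U = (rho, rho u, rho E). *)
Record state := mkState { c_rho : R ; c_mom : R ; c_ener : R }.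

Section Euler.
Variable g : R.

Definition vel (U : state) : R := c_mom U / c_rho U.
(* from E = p/((g-1) rho) + u^2/2 *)
Definition pres (U : state) : R :=
  (g - 1) * (c_ener U - c_rho U * vel U ^ 2 / 2).
Definition admissible (U : state) : Prop := 0 < c_rho U /\ 0 < pres U.

Definition sent (U : state) : R := ln (pres U / Rpower (c_rho U) g).
Definition eta (U : state) : R := - (c_rho U * sent U) / (g - 1).

Definition V1 (U : state) : R :=
  (g - sent U) / (g - 1) - c_rho U * vel U ^ 2 / (2 * pres U).
Definition V2 (U : state) : R := c_rho U * vel U / pres U.
Definition V3 (U : state) : R := - (c_rho U / pres U).
Definition psi (U : state) : R := c_rho U * vel U.

Definition F1 (U : state) : R := c_rho U * vel U.
Definition F2 (U : state) : R := c_rho U * vel U ^ 2 + pres U.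
Definition F3 (U : state) : R := vel U * c_ener U + pres U * vel U.

(* arithmetic mean and jump across an interface (UL = U_j, UR = U_{j+1}) *)
Definition avg (X : state -> R) (UL UR : state) : R := (X UR + X UL) / 2.
Definition jump (X : state -> R) (UL UR : state) : R := X UR - X UL.

Definition eckep1 (UL UR : state) : R := avg F1 UL UR.
Definition eckep2 (UL UR : state) : R :=
  avg F1 UL UR * avg vel UL UR + avg pres UL UR.
Definition alpha3_half (UL UR : state) : R :=
  (avg F1 UL UR * jump V1 UL UR
   + (avg F1 UL UR * avg vel UL UR + avg pres UL UR) * jump V2 UL UR
   + avg F3 UL UR * jump V3 UL UR - jump psi UL UR)
  / (jump V3 UL UR * jump V3 UL UR).
Definition eckep3 (UL UR : state) : R :=
  avg F3 UL UR - alpha3_half UL UR * jump V3 UL UR.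

Definition zeta_num (UL UR : state) : R :=
  avg V1 UL UR * eckep1 UL UR + avg V2 UL UR * eckep2 UL UR
  + avg V3 UL UR * eckep3 UL UR - avg psi UL UR.

Definition K_num (UL UR : state) : R := vel UR * vel UL / 2 * eckep1 UL UR.

Definition kin (U : state) : R := c_rho U * vel U ^ 2 / 2.

End Euler.

(** The ECKEP energy flux is built from the two other components by solving
    the Tadmor condition [ΔV · F = Δψ] for its correction coefficient, which is
    possible as soon as [ΔV_3 <> 0]; this gives (i).  Along a solution the chain
    rule gives [d η(U_j)/dt = V_j · dU_j/dt], and [V_j · (F_{j+1/2} - F_{j-1/2})]
    telescopes into [ζ_{j+1/2} - ζ_{j-1/2}] because the remainders are half the
    Tadmor defects of the two interfaces, which vanish by (i).  Likewise
    [d(ρu²/2)/dt = u d(ρu)/dt - (u²/2) dρ/dt], and with [F^2 = F^1 ū + p̄] the combination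
    [u_j ΔF^2 - u_j²/2 ΔF^1] splits into the jump of [K] and [u_j Δp̄]. *)

From Stdlib Require Import Reals ZArith Lra.
From Coquelicot Require Import Coquelicot.
Open Scope R_scope.

Lemma is_derive_replace (f : R -> R) (x l l' : R) :
  is_derive f x l -> l = l' -> is_derive f x l'.
Proof. now intros Hf <-. Qed.

Lemma is_derive_Rmult (f h : R -> R) (x df dh : R) :
  is_derive f x df -> is_derive h x dh ->
  is_derive (fun s => f s * h s) x (df * h x + f x * dh).
Proof. intros Hf Hh; exact (is_derive_mult f h x df dh Hf Hh Rmult_comm). Qed.

Lemma is_derive_Rmult_const (f : R -> R) (x df k : R) :
  is_derive f x df -> is_derive (fun s => f s * k) x (df * k).
Proof. exact (is_derive_scal_l f x df k). Qed.

Lemma is_derive_Rpower_l (f : R -> R) (x df c : R) :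
  0 < f x -> is_derive f x df ->
  is_derive (fun s => Rpower (f s) c) x (df * (c * Rpower (f x) (c - 1))).
Proof.
  intros Hpos Hf.
  apply (is_derive_comp (fun y => Rpower y c) f); [|exact Hf].
  now apply is_derive_Reals, derivable_pt_lim_power.
Qed.

Lemma is_derive_ln_comp (f : R -> R) (x df : R) :
  0 < f x -> is_derive f x df -> is_derive (fun s => ln (f s)) x (df / f x).
Proof.
  intros Hpos Hf.
  exact (is_derive_comp ln f x _ _ (is_derive_ln _ Hpos) Hf).
Qed.

Lemma is_derive_ln_div_Rpower (p r : R -> R) (x dp dr c : R) :
  0 < p x -> 0 < r x -> is_derive p x dp -> is_derive r x dr ->
  is_derive (fun s => ln (p s / Rpower (r s) c)) x (dp / p x - c * dr / r x).
Proof.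
  intros Hp Hr Dp Dr.
  assert (Hpow_pos : forall y, 0 < Rpower (r x) y) by (intro; apply exp_pos).
  assert (Dq := is_derive_div _ _ _ _ _ Dp (is_derive_Rpower_l r x dr c Hr Dr)
                  (Rgt_not_eq _ _ (Hpow_pos c))).
  assert (Hq : 0 < p x / Rpower (r x) c) by (apply Rdiv_lt_0_compat; auto).
  assert (Dl := is_derive_ln_comp (fun s => p s / Rpower (r s) c) _ _ Hq Dq).
  apply (is_derive_replace _ _ _ _ Dl).
  assert (Hsplit : Rpower (r x) c = Rpower (r x) (c - 1) * r x).
  { rewrite <- (Rpower_1 (r x)) at 3 by exact Hr.
    rewrite <- Rpower_plus; f_equal; ring. }
  rewrite Hsplit; simpl.
  field; repeat split; apply Rgt_not_eq; try apply Hpow_pos; auto.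
Qed.

Section Euler.

Variable g : R.

Definition entropy_conservative (UL UR : state) : Prop :=
  jump (V1 g) UL UR * eckep1 UL UR + jump (V2 g) UL UR * eckep2 g UL UR
  + jump (V3 g) UL UR * eckep3 g UL UR = jump psi UL UR.

Lemma eckep_entropy_conservative (UL UR : state) :
  jump (V3 g) UL UR <> 0 -> entropy_conservative UL UR.
Proof.
  intros HV3; unfold entropy_conservative, eckep1, eckep2, eckep3, alpha3_half.
  field; exact HV3.
Qed.

Lemma zeta_num_jump (UL U UR : state) :
  entropy_conservative UL U -> entropy_conservative U UR ->
  zeta_num g U UR - zeta_num g UL U =
  V1 g U * (eckep1 U UR - eckep1 UL U) + V2 g U * (eckep2 g U UR - eckep2 g UL U)
  + V3 g U * (eckep3 g U UR - eckep3 g UL U).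
Proof.
  unfold entropy_conservative, zeta_num, avg, jump; intros HL HR.
  transitivity (V1 g U * (eckep1 U UR - eckep1 UL U)
    + V2 g U * (eckep2 g U UR - eckep2 g UL U)
    + V3 g U * (eckep3 g U UR - eckep3 g UL U)
    + ((V1 g UR - V1 g U) * eckep1 U UR + (V2 g UR - V2 g U) * eckep2 g U UR
       + (V3 g UR - V3 g U) * eckep3 g U UR - (psi UR - psi U)) / 2
    + ((V1 g U - V1 g UL) * eckep1 UL U + (V2 g U - V2 g UL) * eckep2 g UL U
       + (V3 g U - V3 g UL) * eckep3 g UL U - (psi U - psi UL)) / 2).
  - field.
  - rewrite HL, HR; field.
Qed.

Lemma eckep_kinetic_energy_jump (UL U UR : state) :
  K_num U UR - K_num UL U =
  vel U * (eckep2 g U UR - eckep2 g UL U) - vel U ^ 2 / 2 * (eckep1 U UR - eckep1 UL U)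
  - vel U * (avg (pres g) U UR - avg (pres g) UL U).
Proof. unfold K_num, eckep2, eckep1, avg; field. Qed.

Variable W : R -> state.
Variables t rd md ed : R.
Hypothesis rho_pos : 0 < c_rho (W t).
Hypothesis D_rho : is_derive (fun s => c_rho (W s)) t rd.
Hypothesis D_mom : is_derive (fun s => c_mom (W s)) t md.

Lemma is_derive_kin :
  is_derive (fun s => kin (W s)) t (vel (W t) * md - vel (W t) ^ 2 / 2 * rd).
Proof.
  assert (D_vel := is_derive_div _ _ _ _ _ D_mom D_rho (Rgt_not_eq _ _ rho_pos)).
  assert (D := is_derive_Rmult_const _ _ _ (/ 2)
                 (is_derive_Rmult _ _ _ _ _ D_rho (is_derive_pow _ 2 _ _ D_vel))).
  apply (is_derive_replace _ _ _ _ D).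
  unfold vel; simpl; field; apply Rgt_not_eq, rho_pos.
Qed.

Hypothesis D_ener : is_derive (fun s => c_ener (W s)) t ed.

Lemma is_derive_pres :
  is_derive (fun s => pres g (W s)) t
    ((g - 1) * (ed - vel (W t) * md + vel (W t) ^ 2 / 2 * rd)).
Proof.
  replace (ed - _ + _) with (ed - (vel (W t) * md - vel (W t) ^ 2 / 2 * rd)) by ring.
  exact (is_derive_scal _ _ _ _ (is_derive_minus _ _ _ _ _ D_ener is_derive_kin)).
Qed.

Hypothesis pres_pos : 0 < pres g (W t).
Hypothesis g_gt1 : 1 < g.

Lemma is_derive_eta :
  is_derive (fun s => eta g (W s)) t
    (V1 g (W t) * rd + V2 g (W t) * md + V3 g (W t) * ed).
Proof.
  assert (D_sent := is_derive_ln_div_Rpower _ _ _ _ _ g pres_pos rho_pos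
                      is_derive_pres D_rho).
  assert (D := is_derive_Rmult_const _ _ _ (/ (g - 1))
                 (is_derive_opp _ _ _ (is_derive_Rmult _ _ _ _ _ D_rho D_sent))).
  apply (is_derive_replace _ _ _ _ D).
  unfold V1, V2, V3, sent, vel, opp; simpl.
  field; repeat split; apply Rgt_not_eq; auto; lra.
Qed.

End Euler.

Theorem mainTheorem1
  (g : R) (dx : Z -> R) (U : Z -> R -> state) (a b : R) :
  1 < g ->
  (forall j : Z, 0 < dx j) ->
  (* all states admissible (rho > 0, p > 0) on the time interval *)
  (forall (j : Z) (t : R), a < t < b -> admissible g (U j t)) ->
  (* Delta V_3 <> 0 at every interface *)
  (forall (j : Z) (t : R), a < t < b -> jump (V3 g) (U j t) (U (j + 1)%Z t) <> 0) ->
  (* U solves the semi-discrete scheme with the ECKEP flux *)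
  (forall (j : Z) (t : R), a < t < b ->
     is_derive (fun s => c_rho (U j s)) t
       (- (eckep1 (U j t) (U (j + 1)%Z t) - eckep1 (U (j - 1)%Z t) (U j t)) / dx j)
  /\ is_derive (fun s => c_mom (U j s)) t
       (- (eckep2 g (U j t) (U (j + 1)%Z t) - eckep2 g (U (j - 1)%Z t) (U j t)) / dx j)
  /\ is_derive (fun s => c_ener (U j s)) t
       (- (eckep3 g (U j t) (U (j + 1)%Z t) - eckep3 g (U (j - 1)%Z t) (U j t)) / dx j)) ->
  (* (i) entropy conservation condition at every interface *)
  (forall (j : Z) (t : R), a < t < b ->
     let UL := U j t in let UR := U (j + 1)%Z t in
     jump (V1 g) UL UR * eckep1 UL UR + jump (V2 g) UL UR * eckep2 g UL UR
     + jump (V3 g) UL UR * eckep3 g UL UR = jump psi UL UR)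
  /\
  (* (ii) discrete entropy conservation *)
  (forall (j : Z) (t : R), a < t < b ->
     exists D : R, is_derive (fun s => eta g (U j s)) t D /\
       dx j * D + zeta_num g (U j t) (U (j + 1)%Z t)
                - zeta_num g (U (j - 1)%Z t) (U j t) = 0)
  /\
  (* (iii) kinetic energy preservation *)
  (forall (j : Z) (t : R), a < t < b ->
     exists D : R, is_derive (fun s => kin (U j s)) t D /\
       dx j * D + K_num (U j t) (U (j + 1)%Z t) - K_num (U (j - 1)%Z t) (U j t)
       = - vel (U j t) * (avg (pres g) (U j t) (U (j + 1)%Z t)
                          - avg (pres g) (U (j - 1)%Z t) (U j t))).
Proof.
  intros g_gt1 dx_pos Hadm HV3 Hscheme.
  assert (Hec : forall j t, a < t < b -> entropy_conservative g (U j t) (U (j + 1)%Z t))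
    by (intros; now apply eckep_entropy_conservative, HV3).
  split; [exact Hec | split]; intros j t Ht;
    destruct (Hscheme j t Ht) as (D_rho & D_mom & D_ener), (Hadm j t Ht) as [rho_pos pres_pos];
    pose proof (Rgt_not_eq _ _ (dx_pos j)) as dx_neq0.
  - eexists; split; [exact (is_derive_eta g _ _ _ _ _ rho_pos D_rho D_mom D_ener pres_pos g_gt1)|].
    assert (HecL := Hec (j - 1)%Z t Ht); rewrite Z.sub_add in HecL.
    rewrite <- Rplus_minus_assoc, (zeta_num_jump g _ _ _ HecL (Hec j t Ht)).
    field; exact dx_neq0.
  - eexists; split; [exact (is_derive_kin _ _ _ _ rho_pos D_rho D_mom)|].
    rewrite <- Rplus_minus_assoc, (eckep_kinetic_energy_jump g).
    field; exact dx_neq0.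
Qed.
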